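(* For $s\in\mathbb{C}$ with $s\ne1,2$, we have $\zeta(0,s)=2\,\zeta(-1,s+1)$.
   Context: For an integer $c\ge 0$, $\zeta(-c,s+c)$ denotes the Euler–Zagier double zeta function $\zeta(s_1,s_2)=\sum_{1\le n_1<n_2} n_1^{-s_1}n_2^{-s_2}$ evaluated at $(s_1,s_2)=(-c,s+c)$; i.e. it is the meromorphic continuation to all $s\in\mathbb{C}$ of the series $\sum_{m,n\ge1} m^{c}(m+n)^{-s-c}$, which converges absolutely for $\Re(s)>2$. *)

From Stdlib Require Import Reals.
From Coquelicot Require Import Coquelicot.
Open Scope R_scope.

(* n^{-s} for a positive integer n and complex s, with the real logarithm:
   n^{-s} = exp(-Re s * ln n) * (cos(Im s * ln n) - i sin(Im s * ln n)). *)
Definition npow_neg (n : nat) (s : C) : C :=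
  Cmult (RtoC (exp (- Re s * ln (INR n))))
        (cos (Im s * ln (INR n)), - sin (Im s * ln (INR n))).

(* General term m^c (m+n)^{-(s+c)} of sum_{m,n>=1} m^c (m+n)^{-s-c}, indexed by
   m = i+1, n = j+1. *)
Definition dz_term (c : nat) (s : C) (i j : nat) : C :=
  Cmult (RtoC (INR (S i) ^ c)) (npow_neg (S i + S j) (Cplus s (RtoC (INR c)))).

(* v is the value of the (absolutely convergent, for Re s > 2) double series,
   computed as an iterated sum. *)
Definition dz_series_value (c : nat) (s : C) (v : C) : Prop :=
  exists g : nat -> C,
    (forall i, is_series (fun j => dz_term c s i j) (g i)) /\ is_series g v.

Definition C_holo_at (F : C -> C) (z : C) : Prop :=
  @ex_derive C_AbsRing C_NormedModule F z.

(* F is the analytic continuation of s |-> zeta(-c, s+c) to C \ {1,2}: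
   holomorphic there and equal to the series on Re s > 2. *)
Definition is_dz_continuation (c : nat) (F : C -> C) : Prop :=
  (forall z : C, z <> RtoC 1 -> z <> RtoC 2 -> C_holo_at F z) /\
  (forall s : C, Re s > 2 -> dz_series_value c s (F s)).

(* For Re s > 2 both series can be summed along the diagonals m + n = N: zeta(0, s) is the sum
   of (N - 1) N^-s and, since 1 + ... + (N - 1) = N (N - 1) / 2, zeta(-1, s + 1) is half of it.
   On the iterated sums of the statement this becomes a telescoping identity between the inner
   tails, valid for Re s >= 4.  The difference of the two continuations is thus holomorphic on
   C \ {1, 2} and vanishes on a half-plane, and the identity principle makes it vanish
   everywhere.  The identity principle is proved from Goursat's theorem for rectangles: if G
   vanishes near the centre of a square on which it is holomorphic, then for z near the centre
   G(z) K = \oint G(w) / (w - z) dw with K = \oint dw / (w - z) <> 0, and expanding 1 / (w - z)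
   in powers of (z - centre) / (w - centre) shows that this integral is 0.  Chains of such
   squares reach every point of C \ {1, 2}. *)

From Stdlib Require Import Reals Lra Lia.
From Coquelicot Require Import Coquelicot.
Open Scope R_scope.

Ltac Cring := repeat match goal with x : C |- _ => destruct x end;
  apply injective_projections; simpl; ring.

Lemma Rabs_fst_le_Cmod (z : C) : Rabs (fst z) <= Cmod z.
Proof. eapply Rle_trans; [apply Rmax_l | apply Rmax_Cmod]. Qed.

Lemma Rabs_snd_le_Cmod (z : C) : Rabs (snd z) <= Cmod z.
Proof. eapply Rle_trans; [apply Rmax_r | apply Rmax_Cmod]. Qed.

Lemma Cmod_le_Rabs_fst_snd (z : C) : Cmod z <= Rabs (fst z) + Rabs (snd z).
Proof.
  destruct z as [x y]; simpl.
  replace (x, y) with (RtoC x + Ci * RtoC y)%C by Cring.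
  eapply Rle_trans; [apply Cmod_triangle|].
  rewrite Cmod_mult, Cmod_Ci, !Cmod_R. lra.
Qed.

Lemma Cmod_sub_sym (u v : C) : Cmod (u - v) = Cmod (v - u).
Proof. replace (u - v)%C with (- (v - u))%C by ring. apply Cmod_opp. Qed.

Lemma Cmod_sub_self (w : C) : Cmod (w - w) = 0.
Proof. unfold Cminus. rewrite Cplus_opp_r. apply Cmod_0. Qed.

Lemma Cmod_sub_triangle (u v w : C) : Cmod (u - w) <= Cmod (u - v) + Cmod (v - w).
Proof. replace (u - w)%C with ((u - v) + (v - w))%C by ring. apply Cmod_triangle. Qed.

Lemma Cmod_le_Cmod_sub (u v : C) : Cmod u <= Cmod (u - v) + Cmod v.
Proof. pose proof (Cmod_triangle (u - v) v) as H. replace (u - v + v)%C with u in H by ring. exact H. Qed.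

Lemma Cminus_neq_0 (u v : C) : u <> v -> (u - v)%C <> 0%C.
Proof. intros Huv E. apply Huv. replace u with (u - v + v)%C by ring. rewrite E. ring. Qed.

Lemma C_eq_0_epsilon (x : C) : (forall eps, 0 < eps -> Cmod x <= eps) -> x = 0%C.
Proof.
  intros H. apply Cmod_eq_0, Rle_antisym; [|apply Cmod_ge_0].
  apply Rnot_lt_le. intros Hx. specialize (H (Cmod x / 2)). lra.
Qed.

Lemma Rabs_Cmod_sub_le (u v : C) : Rabs (Cmod u - Cmod v) <= Cmod (u - v).
Proof.
  apply Rabs_le. pose proof (Cmod_le_Cmod_sub u v). pose proof (Cmod_le_Cmod_sub v u).
  rewrite Cmod_sub_sym in H0. lra.
Qed.

Lemma exists_pow_half_lt (K y : R) : 0 <= K -> 0 < y -> exists N : nat, K * (/ 2) ^ N < y.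
Proof.
  intros HK Hy.
  destruct (pow_lt_1_zero (/ 2) ltac:(rewrite Rabs_right; lra) (y / (K + 1)) ltac:(apply Rdiv_lt_0_compat; lra))
    as [N HN].
  exists N. specialize (HN N (le_n N)). rewrite Rabs_right in HN by (apply Rle_ge, pow_le; lra).
  apply Rlt_div_r in HN; [|lra].
  pose proof (pow_le (/ 2) N ltac:(lra)). nra.
Qed.

Definition C_eq_dec (u v : C) : {u = v} + {u <> v}.
Proof.
  destruct u as [a b], v as [c d].
  destruct (Req_EM_T a c), (Req_EM_T b d); subst; auto;
    right; intros E; injection E; auto.
Defined.

(** * Complex differentiability *)

(* Coquelicot's [is_derive] over [C_NormedModule] (used in [C_holo_at]) and over
   [AbsRing_NormedModule C_AbsRing] (needed for its product rule) both unfold to this. *)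
Definition is_Cderiv (f : C -> C) (w l : C) : Prop :=
  forall eps, 0 < eps -> exists del, 0 < del /\ forall v, Cmod (v - w) < del ->
    Cmod (f v - f w - (v - w) * l) <= eps * Cmod (v - w).

Definition ex_Cderiv (f : C -> C) (w : C) : Prop := exists l, is_Cderiv f w l.

Definition Ccontinuous_at (f : C -> C) (w : C) : Prop :=
  forall eps, 0 < eps -> exists del, 0 < del /\ forall v, Cmod (v - w) < del ->
    Cmod (f v - f w) < eps.

Notation CK := (AbsRing_NormedModule C_AbsRing).

Lemma is_Cderiv_is_derive (f : C -> C) (w l : C) : is_Cderiv f w l <-> @is_derive C_AbsRing CK f w l.
Proof.
  split.
  - intros H. split; [apply is_linear_scal_l|].
    intros x Hx. apply (@is_filter_lim_locally_unique C_AbsRing CK) in Hx. subst x.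
    intros [eps Heps]. destruct (H eps Heps) as [d [Hd Hv]].
    exists (mkposreal d Hd). intros v Hb. apply Hv. exact Hb.
  - intros [_ H] eps Heps.
    destruct (H w (fun P HP => HP) (mkposreal eps Heps)) as [d Hd].
    exists d. split; [apply cond_pos|]. intros v Hv. exact (Hd v Hv).
Qed.

Lemma C_holo_at_ex_Cderiv (f : C -> C) (w : C) : C_holo_at f w -> ex_Cderiv f w.
Proof.
  intros [l [_ H]]. exists l. intros eps Heps.
  destruct (H w (fun P HP => HP) (mkposreal eps Heps)) as [d Hd].
  exists d. split; [apply cond_pos|]. intros v Hv. exact (Hd v Hv).
Qed.

Lemma is_Cderiv_Cinv (u : C) : u <> 0%C -> is_Cderiv Cinv u (- / (u * u))%C.
Proof.
  intros Hu eps Heps. assert (Hm : 0 < Cmod u) by (apply Cmod_gt_0; auto).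
  set (m := Cmod u) in *.
  exists (Rmin (m / 2) (eps * (m * m * m) / 2)). split.
  { apply Rmin_pos; [lra|]. apply Rdiv_lt_0_compat; [|lra]. repeat apply Rmult_lt_0_compat; auto. }
  intros v Hv.
  assert (H1 : Cmod (v - u) < m / 2) by (eapply Rlt_le_trans; [exact Hv | apply Rmin_l]).
  assert (H2 : Cmod (v - u) < eps * (m * m * m) / 2) by (eapply Rlt_le_trans; [exact Hv | apply Rmin_r]).
  assert (Hn : m / 2 <= Cmod v).
  { pose proof (Cmod_le_Cmod_sub u v) as H. rewrite Cmod_sub_sym in H. fold m in H. lra. }
  assert (Hv0 : v <> 0%C) by (intros ->; rewrite Cmod_0 in Hn; lra).
  replace (/ v - / u - (v - u) * - / (u * u))%C with ((v - u) * (v - u) / (u * u * v))%C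
    by (field; split; auto).
  rewrite Cmod_div, !Cmod_mult by (repeat apply Cmult_neq_0; auto). fold m.
  pose proof (Cmod_ge_0 (v - u)) as Ha.
  assert (Hmmn : 0 < m * m * Cmod v) by (repeat apply Rmult_lt_0_compat; lra).
  assert (Hsmall : Cmod (v - u) <= eps * (m * m * Cmod v)) by nra.
  apply Rle_div_l; [exact Hmmn|].
  replace (eps * Cmod (v - u) * (m * m * Cmod v)) with (Cmod (v - u) * (eps * (m * m * Cmod v))) by ring.
  apply Rmult_le_compat_l; assumption.
Qed.

Section Cderiv_rules.

Variables (f g : C -> C) (w : C).

Lemma ex_Cderiv_const (k : C) : ex_Cderiv (fun _ => k) w.
Proof. exists 0%C. apply is_Cderiv_is_derive, (@is_derive_const C_AbsRing CK). Qed.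

Lemma ex_Cderiv_id : ex_Cderiv (fun v => v) w.
Proof. exists 1%C. apply is_Cderiv_is_derive, (@is_derive_id C_AbsRing). Qed.

Lemma ex_Cderiv_plus : ex_Cderiv f w -> ex_Cderiv g w -> ex_Cderiv (fun v => f v + g v)%C w.
Proof.
  intros [a Ha] [b Hb]. exists (a + b)%C.
  apply is_Cderiv_is_derive, (@is_derive_plus C_AbsRing CK); apply is_Cderiv_is_derive; assumption.
Qed.

Lemma ex_Cderiv_minus : ex_Cderiv f w -> ex_Cderiv g w -> ex_Cderiv (fun v => f v - g v)%C w.
Proof.
  intros [a Ha] [b Hb]. exists (a - b)%C.
  apply is_Cderiv_is_derive, (@is_derive_minus C_AbsRing CK); apply is_Cderiv_is_derive; assumption.
Qed.

Lemma ex_Cderiv_mult : ex_Cderiv f w -> ex_Cderiv g w -> ex_Cderiv (fun v => f v * g v)%C w.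
Proof.
  intros [a Ha] [b Hb]. exists (a * g w + f w * b)%C.
  apply is_Cderiv_is_derive, (@is_derive_mult C_AbsRing); try apply is_Cderiv_is_derive; try assumption.
  apply Cmult_comm.
Qed.

Lemma ex_Cderiv_inv : ex_Cderiv g w -> g w <> 0%C -> ex_Cderiv (fun v => / g v)%C w.
Proof.
  intros [b Hb] Hgw. exists (scal b (- / (g w * g w)))%C.
  apply is_Cderiv_is_derive, (@is_derive_comp C_AbsRing CK Cinv g);
    apply is_Cderiv_is_derive; [apply is_Cderiv_Cinv|]; assumption.
Qed.

Lemma ex_Cderiv_ext_loc (del : R) : 0 < del -> (forall v, Cmod (v - w) < del -> f v = g v) ->
  ex_Cderiv f w -> ex_Cderiv g w.
Proof.
  intros Hdel Hfg [l Hl]. exists l. intros eps Heps.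
  destruct (Hl eps Heps) as [d [Hd H]]. exists (Rmin del d). split; [apply Rmin_pos; auto|].
  intros v Hv.
  rewrite <- (Hfg v), <- (Hfg w).
  2: rewrite Cmod_sub_self; exact Hdel.
  2: eapply Rlt_le_trans; [exact Hv | apply Rmin_l].
  apply H. eapply Rlt_le_trans; [exact Hv | apply Rmin_r].
Qed.

Lemma ex_Cderiv_continuous : ex_Cderiv f w -> Ccontinuous_at f w.
Proof.
  intros [l Hl] eps Heps.
  destruct (Hl 1 Rlt_0_1) as [d [Hd H]].
  assert (Hl1 : 0 < Cmod l + 1) by (pose proof (Cmod_ge_0 l); lra).
  exists (Rmin d (eps / (Cmod l + 1))). split; [apply Rmin_pos; auto; apply Rdiv_lt_0_compat; auto|].
  intros v Hv.
  assert (Hv1 : Cmod (v - w) < d) by (eapply Rlt_le_trans; [exact Hv | apply Rmin_l]).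
  assert (Hv2 : Cmod (v - w) * (Cmod l + 1) < eps).
  { apply Rlt_div_r; [lra|]. eapply Rlt_le_trans; [exact Hv | apply Rmin_r]. }
  specialize (H v Hv1).
  replace (f v - f w)%C with ((f v - f w - (v - w) * l) + (v - w) * l)%C by ring.
  eapply Rle_lt_trans; [apply Cmod_triangle|]. rewrite Cmod_mult.
  pose proof (Cmod_ge_0 l). pose proof (Cmod_ge_0 (v - w)). nra.
Qed.

End Cderiv_rules.

Lemma ex_Cderiv_pow (c : C) (n : nat) (w : C) : ex_Cderiv (fun v => (v - c) ^ n)%C w.
Proof.
  induction n as [|n IH]; simpl.
  - apply ex_Cderiv_const.
  - apply (ex_Cderiv_mult (fun v => v - c)%C); auto.
    apply ex_Cderiv_minus; [apply ex_Cderiv_id | apply ex_Cderiv_const].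
Qed.

(** * Contour integrals over rectangles *)

Notation CR := C_R_CompleteNormedModule.
Notation CRInt := (@RInt CR).
Notation ex_CRInt := (@ex_RInt CR).
Notation is_CRInt := (@is_RInt CR).

Lemma Cmod_hsub (s t y : R) : Cmod ((s, y) - (t, y)) <= Rabs (s - t).
Proof.
  eapply Rle_trans; [apply Cmod_le_Rabs_fst_snd|]. simpl.
  replace (y + - y) with 0 by ring. rewrite Rabs_R0. unfold Rminus. lra.
Qed.

Lemma Cmod_vsub (s t x : R) : Cmod ((x, s) - (x, t)) <= Rabs (s - t).
Proof.
  eapply Rle_trans; [apply Cmod_le_Rabs_fst_snd|]. simpl.
  replace (x + - x) with 0 by ring. rewrite Rabs_R0. unfold Rminus. lra.
Qed.

Lemma continuous_along_path (f : C -> C) (p : R -> C) (t : R) :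
  (forall s, Cmod (p s - p t) <= Rabs (s - t)) -> Ccontinuous_at f (p t) ->
  @continuous R_UniformSpace CR (fun s => f (p s)) t.
Proof.
  intros Hp Hf. apply (proj2 (filterlim_locally _ _)).
  intros [eps Heps]. destruct (Hf eps Heps) as [d [Hd H]].
  exists (mkposreal d Hd). intros s Hs.
  specialize (H _ (Rle_lt_trans _ _ _ (Hp s) Hs)).
  split; eapply Rle_lt_trans; [| exact H | | exact H].
  - apply (Rabs_fst_le_Cmod (f (p s) - f (p t))%C).
  - apply (Rabs_snd_le_Cmod (f (p s) - f (p t))%C).
Qed.

Lemma ex_CRInt_along_path (f : C -> C) (p : R -> C) (a b : R) :
  a <= b -> (forall s t, Cmod (p s - p t) <= Rabs (s - t)) ->
  (forall t, a <= t <= b -> Ccontinuous_at f (p t)) ->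
  ex_CRInt (fun t => f (p t)) a b.
Proof.
  intros Hab Hp Hf. apply ex_RInt_continuous. intros t Ht.
  rewrite Rmin_left, Rmax_right in Ht by exact Hab.
  apply continuous_along_path; auto.
Qed.

Lemma is_RInt_Cmult_l (k : C) (g : R -> C) (a b : R) (l : C) :
  is_CRInt g a b l -> is_CRInt (fun t => k * g t)%C a b (k * l)%C.
Proof.
  intros H. destruct k as [k1 k2], l as [l1 l2].
  pose proof (@is_RInt_fct_extend_fst R_NormedModule R_NormedModule g a b _ H) as H1.
  pose proof (@is_RInt_fct_extend_snd R_NormedModule R_NormedModule g a b _ H) as H2.
  simpl in H1, H2.
  apply (@is_RInt_fct_extend_pair R_NormedModule R_NormedModule); simpl.
  - apply (is_RInt_ext (fun t => k1 * fst (g t) - k2 * snd (g t))); [intros; reflexivity|].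
    apply (@is_RInt_minus R_NormedModule); apply (@is_RInt_scal R_NormedModule); assumption.
  - apply (is_RInt_ext (fun t => k1 * snd (g t) + k2 * fst (g t))); [intros; reflexivity|].
    apply (@is_RInt_plus R_NormedModule); apply (@is_RInt_scal R_NormedModule); assumption.
Qed.

Definition on_rect_boundary (a b c d : R) (w : C) : Prop :=
  (a <= fst w <= b /\ (snd w = c \/ snd w = d)) \/
  (c <= snd w <= d /\ (fst w = a \/ fst w = b)).

Lemma on_rect_boundary_in (a b c d : R) (w : C) : a <= b -> c <= d ->
  on_rect_boundary a b c d w -> a <= fst w <= b /\ c <= snd w <= d.
Proof. destruct w as [x y]. unfold on_rect_boundary; simpl. lra. Qed.

Lemma on_rect_boundary_neq (a b c d : R) (z w : C) : a < fst z < b -> c < snd z < d ->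
  on_rect_boundary a b c d w -> w <> z.
Proof. intros Hx Hy Hw <-. unfold on_rect_boundary in Hw. lra. Qed.

Definition rect_int (f : C -> C) (a b c d : R) : C :=
  (CRInt (fun t => f (t, c)) a b - CRInt (fun t => f (t, d)) a b
   + Ci * (CRInt (fun t => f (b, t)) c d - CRInt (fun t => f (a, t)) c d))%C.

Section Rect_int.

Variables (a b c d : R).
Hypotheses (Hab : a <= b) (Hcd : c <= d).

Lemma ex_CRInt_hside (f : C -> C) (y : R) :
  (forall t, a <= t <= b -> Ccontinuous_at f (t, y)) -> ex_CRInt (fun t => f (t, y)) a b.
Proof. apply (ex_CRInt_along_path f (fun t => (t, y))); auto using Cmod_hsub. Qed.

Lemma ex_CRInt_vside (f : C -> C) (x : R) :
  (forall t, c <= t <= d -> Ccontinuous_at f (x, t)) -> ex_CRInt (fun t => f (x, t)) c d.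
Proof. apply (ex_CRInt_along_path f (fun t => (x, t))); auto using Cmod_vsub. Qed.

Lemma rect_int_ext (f g : C -> C) :
  (forall w, on_rect_boundary a b c d w -> f w = g w) -> rect_int f a b c d = rect_int g a b c d.
Proof.
  intros Hfg. unfold rect_int.
  rewrite (@RInt_ext CR (fun t => f (t, c)) (fun t => g (t, c))),
          (@RInt_ext CR (fun t => f (t, d)) (fun t => g (t, d))),
          (@RInt_ext CR (fun t => f (a, t)) (fun t => g (a, t))),
          (@RInt_ext CR (fun t => f (b, t)) (fun t => g (b, t))); [reflexivity|..];
  intros x Hx; rewrite ?Rmin_left, ?Rmax_right in Hx by lra;
  apply Hfg; unfold on_rect_boundary; simpl; lra.
Qed.

Definition rect_boundary_continuous (f : C -> C) : Prop :=
  forall w, on_rect_boundary a b c d w -> Ccontinuous_at f w.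

Lemma rect_int_lin (k : C) (f g : C -> C) :
  rect_boundary_continuous f -> rect_boundary_continuous g ->
  rect_int (fun w => f w + k * g w)%C a b c d = (rect_int f a b c d + k * rect_int g a b c d)%C.
Proof.
  intros Hf Hg.
  assert (Hlin : forall (p : R -> C) (u v : R), ex_CRInt (fun t => f (p t)) u v ->
             ex_CRInt (fun t => g (p t)) u v ->
             CRInt (fun t => f (p t) + k * g (p t))%C u v =
             (CRInt (fun t => f (p t)) u v + k * CRInt (fun t => g (p t)) u v)%C).
  { intros p u v [If HIf] [Ig HIg]. apply is_RInt_unique.
    rewrite (is_RInt_unique _ _ _ _ HIf), (is_RInt_unique _ _ _ _ HIg).
    apply (@is_RInt_plus CR); [exact HIf | apply is_RInt_Cmult_l, HIg]. }
  unfold rect_int.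
  rewrite (Hlin (fun t => (t, c))), (Hlin (fun t => (t, d))), (Hlin (fun t => (b, t))),
    (Hlin (fun t => (a, t))); [ring|..];
  first [apply ex_CRInt_hside | apply ex_CRInt_vside]; intros t Ht;
  first [apply Hf | apply Hg]; unfold on_rect_boundary; simpl; lra.
Qed.

Lemma rect_int_bound (f : C -> C) (M : R) :
  rect_boundary_continuous f -> (forall w, on_rect_boundary a b c d w -> Cmod (f w) <= M) ->
  Cmod (rect_int f a b c d) <= 2 * ((b - a) + (d - c)) * M.
Proof.
  intros Hf HM.
  assert (Hside : forall (p : R -> C) (u v : R), u <= v -> ex_CRInt (fun t => f (p t)) u v ->
             (forall t, u <= t <= v -> on_rect_boundary a b c d (p t)) ->
             Cmod (CRInt (fun t => f (p t)) u v) <= (v - u) * M).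
  { intros p u v Huv HI Hp. rewrite Cmod_norm.
    apply (@norm_RInt_le_const CR (fun t => f (p t))); auto.
    - intros t Ht. rewrite <- Cmod_norm. auto.
    - apply (@RInt_correct CR), HI. }
  assert (Hh : forall y, (y = c \/ y = d) ->
             Cmod (CRInt (fun t => f (t, y)) a b) <= (b - a) * M).
  { intros y Hy. apply (Hside (fun t => (t, y))); auto;
      [apply ex_CRInt_hside; intros t Ht; apply Hf|intros t Ht];
      unfold on_rect_boundary; simpl; lra. }
  assert (Hv : forall x, (x = a \/ x = b) ->
             Cmod (CRInt (fun t => f (x, t)) c d) <= (d - c) * M).
  { intros x Hx. apply (Hside (fun t => (x, t))); auto;
      [apply ex_CRInt_vside; intros t Ht; apply Hf|intros t Ht];
      unfold on_rect_boundary; simpl; lra. }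
  unfold rect_int.
  eapply Rle_trans; [apply Cmod_triangle|]. rewrite Cmod_mult, Cmod_Ci, Rmult_1_l.
  unfold Cminus. eapply Rle_trans; [apply Rplus_le_compat; apply Cmod_triangle|]. rewrite !Cmod_opp.
  pose proof (Hh c (or_introl eq_refl)). pose proof (Hh d (or_intror eq_refl)).
  pose proof (Hv a (or_introl eq_refl)). pose proof (Hv b (or_intror eq_refl)).
  lra.
Qed.

End Rect_int.

Lemma CRInt_Chasles (g : R -> C) (u m v : R) : ex_CRInt g u m -> ex_CRInt g m v ->
  CRInt g u v = (CRInt g u m + CRInt g m v)%C.
Proof. intros. symmetry. apply (@RInt_Chasles CR); assumption. Qed.

Lemma rect_int_split_v (f : C -> C) (a m b c d : R) : a <= m <= b ->
  (forall t, a <= t <= b -> Ccontinuous_at f (t, c) /\ Ccontinuous_at f (t, d)) ->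
  rect_int f a b c d = (rect_int f a m c d + rect_int f m b c d)%C.
Proof.
  intros Hm Hf. unfold rect_int.
  rewrite (CRInt_Chasles (fun t => f (t, c)) a m b), (CRInt_Chasles (fun t => f (t, d)) a m b); [ring|..];
  apply ex_CRInt_hside; try lra; intros t Ht; apply Hf; lra.
Qed.

Lemma rect_int_split_h (f : C -> C) (a b c n d : R) : c <= n <= d ->
  (forall t, c <= t <= d -> Ccontinuous_at f (a, t) /\ Ccontinuous_at f (b, t)) ->
  rect_int f a b c d = (rect_int f a b c n + rect_int f a b n d)%C.
Proof.
  intros Hn Hf. unfold rect_int.
  rewrite (CRInt_Chasles (fun t => f (a, t)) c n d), (CRInt_Chasles (fun t => f (b, t)) c n d); [ring|..];
  apply ex_CRInt_vside; try lra; intros t Ht; apply Hf; lra.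
Qed.

Lemma CRInt_minus_const (g h : R -> C) (k : C) (u v : R) :
  ex_CRInt g u v -> ex_CRInt h u v -> (forall t, (g t - h t)%C = k) ->
  (CRInt g u v - CRInt h u v)%C = (RtoC (v - u) * k)%C.
Proof.
  intros [Ig HIg] [Ih HIh] Hk.
  rewrite (is_RInt_unique _ _ _ _ HIg), (is_RInt_unique _ _ _ _ HIh).
  apply (@filterlim_locally_unique _ _ CR _ _ _ _ _ (@is_RInt_minus CR _ _ _ _ _ _ HIg HIh)).
  eapply (@is_RInt_ext CR); [intros t _; symmetry; apply Hk|].
  replace (RtoC (v - u) * k)%C with (@scal _ CR (v - u) k)
    by (destruct k; apply injective_projections; simpl; unfold scal, mult; simpl; unfold mult; simpl; ring).
  apply (@is_RInt_const CR).
Qed.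

Lemma rect_int_affine (al be : C) (a b c d : R) : a <= b -> c <= d ->
  rect_int (fun v => al + v * be)%C a b c d = 0%C.
Proof.
  intros Hab Hcd. set (f := fun v => (al + v * be)%C).
  assert (Hf : forall w, Ccontinuous_at f w).
  { intros w. apply ex_Cderiv_continuous, ex_Cderiv_plus; [apply ex_Cderiv_const|].
    apply (ex_Cderiv_mult (fun v => v)); [apply ex_Cderiv_id | apply ex_Cderiv_const]. }
  unfold rect_int.
  rewrite (CRInt_minus_const (fun t => f (t, c)) (fun t => f (t, d)) ((0, c - d)%R * be)%C a b).
  2, 3: apply ex_CRInt_hside; auto.
  2: intros t; unfold f; Cring.
  rewrite (CRInt_minus_const (fun t => f (b, t)) (fun t => f (a, t)) ((b - a, 0)%R * be)%C c d).
  2, 3: apply ex_CRInt_vside; auto.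
  2: intros t; unfold f; Cring.
  Cring.
Qed.

(** * Goursat's theorem *)

Record rect := Rect { ra : R; rb : R; rc : R; rd : R }.

Definition rint (f : C -> C) (q : rect) : C := rect_int f (ra q) (rb q) (rc q) (rd q).

Definition in_rect (q : rect) (w : C) : Prop := ra q <= fst w <= rb q /\ rc q <= snd w <= rd q.

Definition rect_ok (q : rect) : Prop := ra q <= rb q /\ rc q <= rd q.

Definition rect_size (q : rect) : R := (rb q - ra q) + (rd q - rc q).

Lemma rint_local_bound (f : C -> C) (p l : C) (eps : R) : is_Cderiv f p l -> 0 < eps ->
  exists del, 0 < del /\ forall q, rect_ok q -> in_rect q p -> rect_size q < del ->
    (forall w, in_rect q w -> ex_Cderiv f w) ->
    Cmod (rint f q) <= 2 * eps * rect_size q ^ 2.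
Proof.
  intros Hl Heps. destruct (Hl eps Heps) as [del [Hdel Hdl]].
  exists del. split; [exact Hdel|]. intros q [Hab Hcd] [Hpx Hpy] Hsize Hf.
  set (aff := fun v => (f p - p * l + v * l)%C).
  set (g := fun v => (f v - aff v)%C).
  assert (Hin : forall w, on_rect_boundary (ra q) (rb q) (rc q) (rd q) w -> in_rect q w)
    by (intros w Hw; apply (on_rect_boundary_in _ _ _ _ _ Hab Hcd Hw)).
  assert (Haff : forall w, ex_Cderiv aff w).
  { intros w. apply ex_Cderiv_plus; [apply ex_Cderiv_const|].
    apply (ex_Cderiv_mult (fun v => v)); [apply ex_Cderiv_id | apply ex_Cderiv_const]. }
  assert (Hclose : forall w, in_rect q w -> Cmod (w - p) <= rect_size q).
  { intros w [Hwx Hwy]. eapply Rle_trans; [apply Cmod_le_Rabs_fst_snd|].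
    unfold rect_size. simpl. unfold Rminus at 1 2.
    assert (Rabs (fst w + - fst p) <= rb q - ra q) by (apply Rabs_le; lra).
    assert (Rabs (snd w + - snd p) <= rd q - rc q) by (apply Rabs_le; lra). lra. }
  assert (Hg : forall w, in_rect q w -> Cmod (g w) <= eps * rect_size q).
  { intros w Hw. unfold g, aff.
    replace (f w - (f p - p * l + w * l))%C with (f w - f p - (w - p) * l)%C by ring.
    pose proof (Hclose w Hw). eapply Rle_trans; [apply Hdl; lra|].
    apply Rmult_le_compat_l; lra. }
  assert (E : rint f q = rint g q).
  { unfold rint. rewrite (rect_int_ext _ _ _ _ Hab Hcd f (fun w => g w + 1 * aff w)%C)
      by (intros; unfold g; ring).
    assert (Haff0 : rect_int aff (ra q) (rb q) (rc q) (rd q) = 0%C) by (apply rect_int_affine; auto).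
    rewrite (rect_int_lin _ _ _ _ Hab Hcd), Haff0; [ring|..]; intros w Hw; apply ex_Cderiv_continuous;
      first [apply Haff | apply ex_Cderiv_minus; [apply Hf, Hin, Hw | apply Haff]]. }
  rewrite E. unfold rint.
  replace (2 * eps * rect_size q ^ 2) with (2 * rect_size q * (eps * rect_size q)) by ring.
  apply rect_int_bound; auto.
  intros w Hw. apply ex_Cderiv_continuous, ex_Cderiv_minus; [apply Hf, Hin, Hw | apply Haff].
Qed.

Definition quarter (i j : bool) (q : rect) : rect :=
  let mx := (ra q + rb q) / 2 in
  let my := (rc q + rd q) / 2 in
  Rect (if i then mx else ra q) (if i then rb q else mx)
       (if j then my else rc q) (if j then rd q else my).

Lemma quarter_ok (i j : bool) (q : rect) : rect_ok q -> rect_ok (quarter i j q).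
Proof. unfold rect_ok; destruct i, j; simpl; lra. Qed.

Lemma rect_size_quarter (i j : bool) (q : rect) : rect_size (quarter i j q) = rect_size q / 2.
Proof. unfold rect_size; destruct i, j; simpl; field. Qed.

Lemma rint_quarters (f : C -> C) (q : rect) : rect_ok q -> (forall w, in_rect q w -> Ccontinuous_at f w) ->
  rint f q = (rint f (quarter false false q) + rint f (quarter true false q)
            + rint f (quarter false true q) + rint f (quarter true true q))%C.
Proof.
  destruct q as [a b c d]. unfold rect_ok, in_rect, rint, quarter; simpl. intros [Hab Hcd] Hf.
  rewrite (rect_int_split_v f a ((a + b) / 2) b c d) by (try lra; intros; split; apply Hf; simpl; lra).
  rewrite (rect_int_split_h f a ((a + b) / 2) c ((c + d) / 2) d),
          (rect_int_split_h f ((a + b) / 2) b c ((c + d) / 2) d)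
    by (try lra; intros; split; apply Hf; simpl; lra).
  ring.
Qed.

Definition larger_rint (f : C -> C) (p q : rect) : rect :=
  if Rle_dec (Cmod (rint f p)) (Cmod (rint f q)) then q else p.

Definition largest_quarter (f : C -> C) (q : rect) : rect :=
  larger_rint f (larger_rint f (quarter false false q) (quarter true false q))
                (larger_rint f (quarter false true q) (quarter true true q)).

Lemma largest_quarter_is_quarter (f : C -> C) (q : rect) :
  exists i j, largest_quarter f q = quarter i j q.
Proof.
  unfold largest_quarter, larger_rint.
  repeat destruct Rle_dec; eauto.
Qed.

Lemma rint_largest_quarter (f : C -> C) (q : rect) : rect_ok q ->
  (forall w, in_rect q w -> Ccontinuous_at f w) ->
  Cmod (rint f q) <= 4 * Cmod (rint f (largest_quarter f q)).
Proof.
  intros Hq Hf. rewrite (rint_quarters f q Hq Hf).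
  eapply Rle_trans; [apply Cmod_triangle|].
  eapply Rle_trans; [apply Rplus_le_compat_r, Cmod_triangle|].
  eapply Rle_trans; [apply Rplus_le_compat_r, Rplus_le_compat_r, Cmod_triangle|].
  unfold largest_quarter, larger_rint. repeat destruct Rle_dec; lra.
Qed.

Fixpoint bisect (f : C -> C) (q : rect) (n : nat) : rect :=
  match n with O => q | S n => largest_quarter f (bisect f q n) end.

Section Bisection.

Variables (f : C -> C) (q : rect).
Hypothesis Hq : rect_ok q.

Lemma bisect_step (n : nat) : exists i j, bisect f q (S n) = quarter i j (bisect f q n).
Proof. apply largest_quarter_is_quarter. Qed.

Lemma bisect_ok (n : nat) : rect_ok (bisect f q n).
Proof.
  induction n as [|n IH]; [exact Hq|].
  destruct (bisect_step n) as [i [j ->]]. apply quarter_ok, IH.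
Qed.

Lemma bisect_size (n : nat) : rect_size (bisect f q n) = rect_size q * (/ 2) ^ n.
Proof.
  induction n as [|n IH]; [simpl; ring|].
  destruct (bisect_step n) as [i [j ->]]. rewrite rect_size_quarter, IH. simpl. field.
Qed.

Lemma bisect_nested (m n : nat) : (m <= n)%nat ->
  ra (bisect f q m) <= ra (bisect f q n) /\ rb (bisect f q n) <= rb (bisect f q m) /\
  rc (bisect f q m) <= rc (bisect f q n) /\ rd (bisect f q n) <= rd (bisect f q m).
Proof.
  induction 1 as [|n _ IH]; [lra|].
  pose proof (bisect_ok n) as [Hx Hy].
  destruct (bisect_step n) as [i [j ->]]. destruct i, j; simpl; lra.
Qed.

Lemma in_bisect (n : nat) (w : C) : in_rect (bisect f q n) w -> in_rect q w.
Proof. pose proof (bisect_nested 0 n (Nat.le_0_l n)). unfold in_rect; simpl in *; lra. Qed.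

Lemma rint_bisect (n : nat) : (forall w, in_rect q w -> Ccontinuous_at f w) ->
  Cmod (rint f q) <= 4 ^ n * Cmod (rint f (bisect f q n)).
Proof.
  intros Hf. induction n as [|n IH]; [simpl; lra|].
  eapply Rle_trans; [exact IH|]. simpl bisect.
  replace (4 ^ S n * Cmod (rint f (largest_quarter f (bisect f q n))))
    with (4 ^ n * (4 * Cmod (rint f (largest_quarter f (bisect f q n))))) by (simpl; ring).
  apply Rmult_le_compat_l; [apply pow_le; lra|].
  apply rint_largest_quarter; [apply bisect_ok|].
  intros w Hw. apply Hf, (in_bisect n), Hw.
Qed.

Lemma exists_in_all_bisect : exists p, forall n, in_rect (bisect f q n) p.
Proof.
  assert (Hcommon : forall (u v : nat -> R), (forall m n, u m <= v n) ->
            exists x, forall n, u n <= x <= v n).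
  { intros u v Huv.
    destruct (completeness (fun x => exists n, x = u n)) as [x [Hub Hlub]].
    - exists (v O). intros y [n ->]. apply Huv.
    - exists (u O), O. reflexivity.
    - exists x. intros n. split; [apply Hub; exists n; reflexivity|].
      apply Hlub. intros y [k ->]. apply Huv. }
  assert (Hcross : forall m n, ra (bisect f q m) <= rb (bisect f q n) /\ rc (bisect f q m) <= rd (bisect f q n)).
  { intros m n. pose proof (bisect_nested m (max m n) (Nat.le_max_l m n)).
    pose proof (bisect_nested n (max m n) (Nat.le_max_r m n)).
    pose proof (bisect_ok (max m n)) as [? ?]. lra. }
  destruct (Hcommon (fun n => ra (bisect f q n)) (fun n => rb (bisect f q n))) as [x Hx];
    [intros; apply Hcross|].
  destruct (Hcommon (fun n => rc (bisect f q n)) (fun n => rd (bisect f q n))) as [y Hy];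
    [intros; apply Hcross|].
  exists (x, y). intros n. split; [apply Hx | apply Hy].
Qed.

End Bisection.

Theorem Goursat (f : C -> C) (a b c d : R) : a <= b -> c <= d ->
  (forall w, a <= fst w <= b -> c <= snd w <= d -> ex_Cderiv f w) ->
  rect_int f a b c d = 0%C.
Proof.
  intros Hab Hcd Hf.
  set (q := Rect a b c d).
  assert (Hq : rect_ok q) by (split; simpl; assumption).
  assert (Hfq : forall w, in_rect q w -> ex_Cderiv f w) by (intros w [? ?]; apply Hf; assumption).
  destruct (exists_in_all_bisect f q Hq) as [p Hp].
  destruct (Hfq p (in_bisect f q Hq 0 p (Hp O))) as [l Hl].
  change (rint f q = 0%C). apply C_eq_0_epsilon. intros eps Heps.
  set (S := rect_size q).
  assert (HS : 0 <= S) by (unfold S, rect_size; simpl; lra).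
  set (eps' := eps / (2 * S ^ 2 + 1)).
  assert (Heps' : 0 < eps') by (apply Rdiv_lt_0_compat; nra).
  destruct (rint_local_bound f p l eps' Hl Heps') as [del [Hdel Hloc]].
  destruct (exists_pow_half_lt S del HS Hdel) as [N HN].
  eapply Rle_trans; [apply (rint_bisect f q Hq N); intros; apply ex_Cderiv_continuous, Hfq; auto|].
  eapply Rle_trans.
  - apply Rmult_le_compat_l; [apply pow_le; lra|].
    apply Hloc; [apply bisect_ok, Hq | apply Hp | rewrite bisect_size; exact HN |].
    intros w Hw. apply Hfq, (in_bisect f q Hq N w Hw).
  - rewrite bisect_size. fold S.
    assert (E : 4 ^ N * ((/ 2) ^ N * (/ 2) ^ N) = 1).
    { rewrite <- !Rpow_mult_distr. replace (4 * (/ 2 * / 2)) with 1 by field. apply pow1. }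
    replace (4 ^ N * (2 * eps' * (S * (/ 2) ^ N) ^ 2))
      with (eps * (2 * S ^ 2 / (2 * S ^ 2 + 1)) * (4 ^ N * ((/ 2) ^ N * (/ 2) ^ N)))
      by (unfold eps'; field; nra).
    rewrite E, Rmult_1_r.
    assert (2 * S ^ 2 / (2 * S ^ 2 + 1) <= 1) by (apply Rle_div_l; nra).
    nra.
Qed.

Lemma rect_int_shrink (f : C -> C) (a a' b' b c c' d' d : R) :
  a <= a' <= b' -> b' <= b -> c <= c' <= d' -> d' <= d ->
  (forall w, a <= fst w <= b -> c <= snd w <= d -> ~ (a' < fst w < b' /\ c' < snd w < d') ->
     ex_Cderiv f w) ->
  rect_int f a b c d = rect_int f a' b' c' d'.
Proof.
  intros Ha Hb Hc Hd Hf.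
  assert (Hcont : forall w, a <= fst w <= b -> c <= snd w <= d ->
             ~ (a' < fst w < b' /\ c' < snd w < d') -> Ccontinuous_at f w)
    by (intros; apply ex_Cderiv_continuous; auto).
  rewrite (rect_int_split_v f a a' b c d), (rect_int_split_v f a' b' b c d),
    (rect_int_split_h f a' b' c c' d), (rect_int_split_h f a' b' c' d' d)
    by (try lra; intros t Ht; split; apply Hcont; simpl; lra).
  rewrite (Goursat f a a' c d), (Goursat f b' b c d), (Goursat f a' b' c c'), (Goursat f a' b' d' d)
    by (try lra; intros w Hw1 Hw2; apply Hf; lra).
  ring.
Qed.

Lemma rect_int_removable (f : C -> C) (a b c d : R) (z : C) (B r0 : R) :
  a < fst z < b -> c < snd z < d -> 0 < r0 ->
  (forall w, a <= fst w <= b -> c <= snd w <= d -> w <> z -> ex_Cderiv f w) ->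
  (forall w, Cmod (w - z) < r0 -> Cmod (f w) <= B) ->
  rect_int f a b c d = 0%C.
Proof.
  intros Hzx Hzy Hr0 Hf HB.
  assert (HB0 : 0 <= B) by (eapply Rle_trans; [apply Cmod_ge_0 | apply HB; rewrite Cmod_sub_self; lra]).
  destruct z as [zx zy]; simpl in *.
  apply C_eq_0_epsilon. intros eps Heps.
  set (r := Rmin (Rmin (Rmin (zx - a) (b - zx)) (Rmin (zy - c) (d - zy))) (Rmin (r0 / 4) (eps / (8 * B + 1)))).
  assert (Hr : 0 < r) by (unfold r; repeat apply Rmin_pos; try apply Rdiv_lt_0_compat; lra).
  assert (Hrz : r <= zx - a /\ r <= b - zx /\ r <= zy - c /\ r <= d - zy).
  { unfold r. pose proof (Rmin_l (Rmin (Rmin (zx - a) (b - zx)) (Rmin (zy - c) (d - zy)))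
                                 (Rmin (r0 / 4) (eps / (8 * B + 1)))).
    pose proof (Rmin_l (zx - a) (b - zx)). pose proof (Rmin_r (zx - a) (b - zx)).
    pose proof (Rmin_l (zy - c) (d - zy)). pose proof (Rmin_r (zy - c) (d - zy)).
    pose proof (Rmin_l (Rmin (zx - a) (b - zx)) (Rmin (zy - c) (d - zy))).
    pose proof (Rmin_r (Rmin (zx - a) (b - zx)) (Rmin (zy - c) (d - zy))). lra. }
  assert (Hr0' : r <= r0 / 4 /\ r <= eps / (8 * B + 1)).
  { unfold r. pose proof (Rmin_r (Rmin (Rmin (zx - a) (b - zx)) (Rmin (zy - c) (d - zy)))
                                 (Rmin (r0 / 4) (eps / (8 * B + 1)))).
    pose proof (Rmin_l (r0 / 4) (eps / (8 * B + 1))). pose proof (Rmin_r (r0 / 4) (eps / (8 * B + 1))). lra. }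
  assert (Hnz : forall w, ~ (zx - r < fst w < zx + r /\ zy - r < snd w < zy + r) -> w <> (zx, zy))
    by (intros w Hw E; subst w; simpl in Hw; lra).
  rewrite (rect_int_shrink f a (zx - r) (zx + r) b c (zy - r) (zy + r) d)
    by (try lra; intros w Hw1 Hw2 Hw; apply Hf; auto).
  assert (Hx : zx - r <= zx + r) by lra. assert (Hy : zy - r <= zy + r) by lra.
  eapply Rle_trans; [apply (rect_int_bound _ _ _ _ Hx Hy f B)|].
  - intros [x y] Hw. unfold on_rect_boundary in Hw; simpl in Hw.
    apply ex_Cderiv_continuous, Hf, Hnz; simpl; lra.
  - intros [x y] Hw. unfold on_rect_boundary in Hw; simpl in Hw. apply HB.
    eapply Rle_lt_trans; [apply Cmod_le_Rabs_fst_snd|]. simpl.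
    assert (Rabs (x + - zx) <= r) by (apply Rabs_le; lra).
    assert (Rabs (y + - zy) <= r) by (apply Rabs_le; lra). lra.
  - destruct Hr0' as [_ Hre]. apply Rle_div_r in Hre; [|lra]. nra.
Qed.

Lemma Im_CRInt (g : R -> C) (u v : R) : ex_CRInt g u v -> Im (CRInt g u v) = RInt (fun t => Im (g t)) u v.
Proof.
  intros Hg. symmetry. apply is_RInt_unique.
  apply (@is_RInt_fct_extend_snd R_NormedModule R_NormedModule), (@RInt_correct CR), Hg.
Qed.

Lemma Re_CRInt (g : R -> C) (u v : R) : ex_CRInt g u v -> Re (CRInt g u v) = RInt (fun t => Re (g t)) u v.
Proof.
  intros Hg. symmetry. apply is_RInt_unique.
  apply (@is_RInt_fct_extend_fst R_NormedModule R_NormedModule), (@RInt_correct CR), Hg.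
Qed.

Lemma Poisson_den_pos (x p : R) : 0 < p -> 0 < x ^ 2 + p ^ 2.
Proof. intros Hp. pose proof (pow_lt p 2 Hp). pose proof (pow2_ge_0 x). lra. Qed.

Lemma RInt_Poisson_pos (u v p q : R) : u < v -> 0 < p ->
  0 < RInt (fun t => p / ((t - q) ^ 2 + p ^ 2)) u v.
Proof.
  intros Huv Hp.
  assert (Hden : forall t, 0 < (t - q) ^ 2 + p ^ 2) by (intros; apply Poisson_den_pos, Hp).
  apply RInt_gt_0; [exact Huv | |].
  - intros t _. apply Rdiv_lt_0_compat; [exact Hp | apply Hden].
  - intros t _. apply (@ex_derive_continuous R_AbsRing R_NormedModule). auto_derive. apply Rgt_not_eq, Hden.
Qed.

Lemma Im_rect_int_kernel_pos (a b c d : R) (z : C) : a < fst z < b -> c < snd z < d ->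
  0 < Im (rect_int (fun w => / (w - z))%C a b c d).
Proof.
  destruct z as [zx zy]. intros Hzx Hzy. simpl in Hzx, Hzy.
  set (k := fun w => (/ (w - (zx, zy)))%C).
  assert (Hk : forall w, w <> (zx, zy) -> Ccontinuous_at k w).
  { intros w Hw. apply ex_Cderiv_continuous, ex_Cderiv_inv;
      [apply ex_Cderiv_minus; [apply ex_Cderiv_id | apply ex_Cderiv_const] | apply Cminus_neq_0, Hw]. }
  assert (Hh : forall y, y <> zy -> ex_CRInt (fun t => k (t, y)) a b)
    by (intros y Hy; apply ex_CRInt_hside; [lra|]; intros t _; apply Hk; intros E; injection E; intros; lra).
  assert (Hv : forall x, x <> zx -> ex_CRInt (fun t => k (x, t)) c d)
    by (intros x Hx; apply ex_CRInt_vside; [lra|]; intros t _; apply Hk; intros E; injection E; intros; lra).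
  unfold rect_int.
  assert (HIm : forall X Y U V : C, Im (X - Y + Ci * (U - V))%C = Im X - Im Y + (Re U - Re V))
    by (intros [] [] [] []; simpl; ring).
  rewrite HIm.
  rewrite !Im_CRInt, !Re_CRInt by (apply Hh || apply Hv; lra).
  rewrite (RInt_ext (fun t => Im (k (t, c))) (fun t => (zy - c) / ((t - zx) ^ 2 + (zy - c) ^ 2))),
    (RInt_ext (fun t => Im (k (t, d))) (fun t => - ((d - zy) / ((t - zx) ^ 2 + (d - zy) ^ 2)))),
    (RInt_ext (fun t => Re (k (b, t))) (fun t => (b - zx) / ((t - zy) ^ 2 + (b - zx) ^ 2))),
    (RInt_ext (fun t => Re (k (a, t))) (fun t => - ((zx - a) / ((t - zy) ^ 2 + (zx - a) ^ 2))));
    try (intros t _; unfold k; simpl; field;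
         apply Rgt_not_eq, Rplus_le_lt_0_compat; [apply Rle_0_sqr | apply Rsqr_pos_lt; lra]).
  assert (Hneg : forall (P : R -> R) (u v : R), ex_RInt P u v -> RInt (fun t => - P t) u v = - RInt P u v)
    by (intros P u v HP; apply is_RInt_unique, (@is_RInt_opp R_NormedModule P), (@RInt_correct R_CompleteNormedModule), HP).
  rewrite !Hneg by (apply (@ex_RInt_continuous R_CompleteNormedModule); intros;
    apply (@ex_derive_continuous R_AbsRing R_NormedModule); auto_derive;
    apply Rgt_not_eq, Poisson_den_pos; lra).
  pose proof (RInt_Poisson_pos a b (zy - c) zx). pose proof (RInt_Poisson_pos a b (d - zy) zx).
  pose proof (RInt_Poisson_pos c d (b - zx) zy). pose proof (RInt_Poisson_pos c d (zx - a) zy).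
  lra.
Qed.

Lemma rect_int_Cauchy_kernel (G : C -> C) (a b c d : R) (z : C) : a < fst z < b -> c < snd z < d ->
  (forall w, a <= fst w <= b -> c <= snd w <= d -> ex_Cderiv G w) ->
  rect_int (fun w => G w * / (w - z))%C a b c d = (G z * rect_int (fun w => / (w - z))%C a b c d)%C.
Proof.
  intros Hzx Hzy HG.
  assert (Hab : a <= b) by lra. assert (Hcd : c <= d) by lra.
  destruct (HG z ltac:(lra) ltac:(lra)) as [l Hl].
  set (h := fun w => if C_eq_dec w z then l else ((G w - G z) * / (w - z))%C).
  assert (Hkernel : forall w, w <> z -> ex_Cderiv (fun v => / (v - z))%C w)
    by (intros w Hw; apply ex_Cderiv_inv; [apply ex_Cderiv_minus; [apply ex_Cderiv_id | apply ex_Cderiv_const]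
                                          | apply Cminus_neq_0, Hw]).
  assert (Hh : forall w, a <= fst w <= b -> c <= snd w <= d -> w <> z -> ex_Cderiv h w).
  { intros w Hw1 Hw2 Hwz.
    apply (ex_Cderiv_ext_loc (fun v => (G v - G z) * / (v - z))%C h w (Cmod (w - z))).
    - apply Cmod_gt_0, Cminus_neq_0, Hwz.
    - intros v Hv. unfold h. destruct (C_eq_dec v z) as [->|]; [|reflexivity].
      rewrite Cmod_sub_sym in Hv. lra.
    - apply ex_Cderiv_mult; [apply ex_Cderiv_minus; [apply HG; auto | apply ex_Cderiv_const] | auto]. }
  assert (Hh0 : rect_int h a b c d = 0%C).
  { destruct (Hl 1 Rlt_0_1) as [del [Hdel Hd]].
    apply (rect_int_removable h a b c d z (Cmod l + 1) del); auto.
    intros w Hw. unfold h. destruct (C_eq_dec w z) as [_|Hwz]; [lra|].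
    assert (Hwz0 : (w - z)%C <> 0%C) by (apply Cminus_neq_0, Hwz).
    replace ((G w - G z) * / (w - z))%C with (l + (G w - G z - (w - z) * l) * / (w - z))%C
      by (field; exact Hwz0).
    eapply Rle_trans; [apply Cmod_triangle|]. apply Rplus_le_compat_l.
    rewrite Cmod_mult, Cmod_inv by exact Hwz0.
    pose proof (proj1 (Cmod_gt_0 _) Hwz0).
    apply (Rmult_le_reg_r (Cmod (w - z))); [lra|].
    rewrite Rmult_assoc, Rinv_l, Rmult_1_r by lra. specialize (Hd w Hw). lra. }
  rewrite (rect_int_ext _ _ _ _ Hab Hcd _ (fun w => h w + G z * / (w - z))%C).
  - rewrite rect_int_lin, Hh0 by (auto; intros w Hw; pose proof (on_rect_boundary_neq _ _ _ _ _ _ Hzx Hzy Hw);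
      apply ex_Cderiv_continuous; first [apply Hkernel | apply Hh]; auto;
      apply (on_rect_boundary_in _ _ _ _ _ Hab Hcd Hw)).
    ring.
  - intros w Hw. pose proof (on_rect_boundary_neq _ _ _ _ _ _ Hzx Hzy Hw) as Hwz.
    unfold h. destruct (C_eq_dec w z) as [E|_]; [contradiction|].
    field. apply Cminus_neq_0, Hwz.
Qed.

(** * The identity principle *)

Lemma continuity_pt_Cmod_path (f : C -> C) (p : R -> C) (t : R) :
  (forall s, Cmod (p s - p t) <= Rabs (s - t)) -> Ccontinuous_at f (p t) ->
  continuity_pt (fun s => Cmod (f (p s))) t.
Proof.
  intros Hp Hf. apply continuity_pt_filterlim, (proj2 (filterlim_locally _ _)).
  intros [eps Heps]. destruct (Hf eps Heps) as [d [Hd H]].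
  exists (mkposreal d Hd). intros s Hs.
  eapply Rle_lt_trans; [apply Rabs_Cmod_sub_le | apply H, (Rle_lt_trans _ _ _ (Hp s) Hs)].
Qed.

Lemma rect_boundary_bounded (f : C -> C) (a b c d : R) : a <= b -> c <= d ->
  rect_boundary_continuous a b c d f ->
  exists M, forall w, on_rect_boundary a b c d w -> Cmod (f w) <= M.
Proof.
  intros Hab Hcd Hf.
  assert (Hside : forall (p : R -> C) (u v : R), u <= v -> (forall s t, Cmod (p s - p t) <= Rabs (s - t)) ->
            (forall t, u <= t <= v -> on_rect_boundary a b c d (p t)) ->
            exists M, forall t, u <= t <= v -> Cmod (f (p t)) <= M).
  { intros p u v Huv Hp Hon.
    destruct (continuity_ab_maj (fun t => Cmod (f (p t))) u v Huv) as [x [Hx _]].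
    - intros t Ht. apply continuity_pt_Cmod_path; auto.
    - exists (Cmod (f (p x))). exact Hx. }
  destruct (Hside (fun t => (t, c)) a b Hab (fun s t => Cmod_hsub s t c)) as [M1 H1];
    [intros; unfold on_rect_boundary; simpl; lra|].
  destruct (Hside (fun t => (t, d)) a b Hab (fun s t => Cmod_hsub s t d)) as [M2 H2];
    [intros; unfold on_rect_boundary; simpl; lra|].
  destruct (Hside (fun t => (a, t)) c d Hcd (fun s t => Cmod_vsub s t a)) as [M3 H3];
    [intros; unfold on_rect_boundary; simpl; lra|].
  destruct (Hside (fun t => (b, t)) c d Hcd (fun s t => Cmod_vsub s t b)) as [M4 H4];
    [intros; unfold on_rect_boundary; simpl; lra|].
  exists (Rmax (Rmax M1 M2) (Rmax M3 M4)). intros [x y] Hw. unfold on_rect_boundary in Hw; simpl in Hw.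
  pose proof (Rmax_l M1 M2). pose proof (Rmax_r M1 M2). pose proof (Rmax_l M3 M4). pose proof (Rmax_r M3 M4).
  pose proof (Rmax_l (Rmax M1 M2) (Rmax M3 M4)). pose proof (Rmax_r (Rmax M1 M2) (Rmax M3 M4)).
  destruct Hw as [[Hx [-> | ->]] | [Hy [-> | ->]]].
  - pose proof (H1 x Hx). lra.
  - pose proof (H2 x Hx). lra.
  - pose proof (H3 y Hy). lra.
  - pose proof (H4 y Hy). lra.
Qed.

Definition vanishes_near (G : C -> C) (p : C) : Prop :=
  exists rho, 0 < rho /\ forall w, Cmod (w - p) < rho -> G w = 0%C.

Fixpoint kernel_expansion (G : C -> C) (z cc : C) (N : nat) (w : C) : C :=
  match N with
  | O => 0%C
  | S N => (kernel_expansion G z cc N w + G w * (z - cc) ^ N * / (w - cc) ^ S N)%C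
  end.

Definition kernel_remainder (G : C -> C) (z cc : C) (N : nat) (w : C) : C :=
  (G w * (z - cc) ^ N * / ((w - cc) ^ N * (w - z)))%C.

Lemma kernel_expansion_remainder (G : C -> C) (z cc w : C) (N : nat) : w <> cc -> w <> z ->
  (G w * / (w - z))%C = (kernel_expansion G z cc N w + kernel_remainder G z cc N w)%C.
Proof.
  unfold kernel_remainder. intros Hc Hz. apply Cminus_neq_0 in Hc, Hz.
  induction N as [|N IH]; simpl.
  - field. exact Hz.
  - rewrite IH. pose proof (Cpow_nz _ N Hc).
    generalize dependent ((w - cc) ^ N)%C. generalize ((z - cc) ^ N)%C. intros Q P _ HP.
    field. auto.
Qed.

Lemma ex_Cderiv_kernel_expansion (G : C -> C) (z cc w : C) (N : nat) :
  vanishes_near G cc -> ex_Cderiv G w \/ w = cc -> ex_Cderiv (kernel_expansion G z cc N) w.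
Proof.
  intros [rho [Hrho H0]] HG. induction N as [|N IH]; simpl; [apply ex_Cderiv_const|].
  apply ex_Cderiv_plus; [exact IH|].
  destruct (Rlt_dec (Cmod (w - cc)) rho) as [Hw | Hw].
  - apply (ex_Cderiv_ext_loc (fun _ => 0%C) _ w (rho - Cmod (w - cc))); [lra | | apply ex_Cderiv_const].
    intros v Hv. rewrite H0; [ring|]. pose proof (Cmod_sub_triangle v w cc). lra.
  - assert (Hwc : w <> cc) by (intros ->; rewrite Cmod_sub_self in Hw; lra).
    destruct HG as [HG | ->]; [|contradiction].
    apply ex_Cderiv_mult; [apply ex_Cderiv_mult; [exact HG | apply ex_Cderiv_const]|].
    apply ex_Cderiv_inv; [apply (ex_Cderiv_pow cc (S N) w) | apply (Cpow_nz _ (S N)), Cminus_neq_0, Hwc].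
Qed.

Lemma ex_Cderiv_kernel_remainder (G : C -> C) (z cc w : C) (N : nat) :
  ex_Cderiv G w -> w <> cc -> w <> z -> ex_Cderiv (kernel_remainder G z cc N) w.
Proof.
  intros HG Hc Hz. unfold kernel_remainder.
  apply ex_Cderiv_mult; [apply ex_Cderiv_mult; [exact HG | apply ex_Cderiv_const]|].
  apply ex_Cderiv_inv.
  - apply ex_Cderiv_mult; [apply ex_Cderiv_pow | apply ex_Cderiv_minus; [apply ex_Cderiv_id | apply ex_Cderiv_const]].
  - apply Cmult_neq_0; [apply Cpow_nz|]; apply Cminus_neq_0; assumption.
Qed.

Lemma rect_int_kernel_remainder (G : C -> C) (a b c d : R) (z cc : C) (N : nat) :
  a < fst z < b -> c < snd z < d -> vanishes_near G cc ->
  (forall w, a <= fst w <= b -> c <= snd w <= d -> ex_Cderiv G w) ->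
  (forall w, on_rect_boundary a b c d w -> w <> cc) ->
  rect_int (fun w => G w * / (w - z))%C a b c d = rect_int (kernel_remainder G z cc N) a b c d.
Proof.
  intros Hzx Hzy H0 HG Hcc.
  assert (Hab : a <= b) by lra. assert (Hcd : c <= d) by lra.
  assert (Hin : forall w, on_rect_boundary a b c d w -> a <= fst w <= b /\ c <= snd w <= d)
    by (intros; apply on_rect_boundary_in; assumption).
  assert (Hexp : forall w, a <= fst w <= b -> c <= snd w <= d -> ex_Cderiv (kernel_expansion G z cc N) w)
    by (intros w Hw1 Hw2; apply ex_Cderiv_kernel_expansion; [exact H0 | left; apply HG; auto]).
  rewrite (rect_int_ext _ _ _ _ Hab Hcd _
             (fun w => kernel_expansion G z cc N w + 1 * kernel_remainder G z cc N w)%C)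
    by (intros w Hw; rewrite Cmult_1_l; apply kernel_expansion_remainder;
        [apply Hcc | apply (on_rect_boundary_neq a b c d z)]; assumption).
  rewrite (rect_int_lin _ _ _ _ Hab Hcd), (Goursat _ _ _ _ _ Hab Hcd Hexp), Cplus_0_l, Cmult_1_l;
    [reflexivity|..]; intros w Hw; apply ex_Cderiv_continuous; [apply Hexp; apply Hin, Hw|].
  apply ex_Cderiv_kernel_remainder; [apply HG; apply Hin, Hw | apply Hcc, Hw |].
  apply (on_rect_boundary_neq a b c d z); assumption.
Qed.

Lemma Cmod_remainder_le (g q u v : C) (M r : R) (N : nat) : 0 < r ->
  Cmod g <= M -> Cmod q <= r / 2 -> r <= Cmod u -> r / 2 <= Cmod v ->
  Cmod (g * q ^ N * / (u ^ N * v)) <= M * (/ 2) ^ N * (2 / r).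
Proof.
  intros Hr Hg Hq Hu Hv.
  assert (Hu0 : u <> 0%C) by (intros ->; rewrite Cmod_0 in Hu; lra).
  assert (Hv0 : v <> 0%C) by (intros ->; rewrite Cmod_0 in Hv; lra).
  rewrite Cmod_mult, Cmod_inv, !Cmod_mult, !Cmod_pow by (apply Cmult_neq_0; [apply Cpow_nz|]; assumption).
  pose proof (Cmod_ge_0 g). pose proof (Cmod_ge_0 q).
  assert (HrN : 0 < r ^ N) by (apply pow_lt; lra).
  apply Rle_trans with (M * (r / 2) ^ N * / (r ^ N * (r / 2))).
  - apply Rmult_le_compat.
    + apply Rmult_le_pos; [lra | apply pow_le; lra].
    + left. apply Rinv_0_lt_compat, Rmult_lt_0_compat; [apply pow_lt|]; lra.
    + apply Rmult_le_compat; try lra; [apply pow_le; lra | apply pow_incr; lra].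
    + apply Rinv_le_contravar; [apply Rmult_lt_0_compat; lra|].
      apply Rmult_le_compat; try lra; apply pow_incr; lra.
  - right. unfold Rdiv. rewrite Rpow_mult_distr. field. split; lra.
Qed.

Lemma on_square_boundary_far (cx cy r : R) (w : C) : 0 <= r ->
  on_rect_boundary (cx - r) (cx + r) (cy - r) (cy + r) w -> r <= Cmod (w - (cx, cy)).
Proof.
  intros Hr Hw. destruct w as [x y]. unfold on_rect_boundary in Hw; simpl in Hw.
  destruct Hw as [[_ [-> | ->]] | [_ [-> | ->]]];
    [ eapply Rle_trans; [|apply (Rabs_snd_le_Cmod ((x, cy - r) - (cx, cy)))]
    | eapply Rle_trans; [|apply (Rabs_snd_le_Cmod ((x, cy + r) - (cx, cy)))]
    | eapply Rle_trans; [|apply (Rabs_fst_le_Cmod ((cx - r, y) - (cx, cy)))]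
    | eapply Rle_trans; [|apply (Rabs_fst_le_Cmod ((cx + r, y) - (cx, cy)))] ]; simpl;
    [rewrite Rabs_left1 | rewrite Rabs_right | rewrite Rabs_left1 | rewrite Rabs_right]; lra.
Qed.

Lemma in_square_of_Cmod_lt (cx cy r : R) (z : C) : Cmod (z - (cx, cy)) < r ->
  cx - r < fst z < cx + r /\ cy - r < snd z < cy + r.
Proof.
  intros Hz. pose proof (Rabs_fst_le_Cmod (z - (cx, cy))). pose proof (Rabs_snd_le_Cmod (z - (cx, cy))).
  simpl in *. assert (Hx : Rabs (fst z + - cx) < r) by lra. assert (Hy : Rabs (snd z + - cy) < r) by lra.
  apply Rabs_def2 in Hx, Hy. lra.
Qed.

Lemma vanishes_on_half_square (G : C -> C) (cc : C) (r : R) : 0 < r -> vanishes_near G cc ->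
  (forall w, Rabs (fst w - fst cc) <= r -> Rabs (snd w - snd cc) <= r -> ex_Cderiv G w) ->
  forall z, Cmod (z - cc) < r / 2 -> G z = 0%C.
Proof.
  intros Hr H0 HG z Hz. destruct cc as [cx cy]. simpl in HG.
  set (a := cx - r). set (b := cx + r). set (c := cy - r). set (d := cy + r).
  assert (Hab : a <= b) by (unfold a, b; lra). assert (Hcd : c <= d) by (unfold c, d; lra).
  assert (HGsq : forall w, a <= fst w <= b -> c <= snd w <= d -> ex_Cderiv G w)
    by (intros w Hw1 Hw2; apply HG; apply Rabs_le; unfold a, b, c, d in *; lra).
  destruct (in_square_of_Cmod_lt cx cy (r / 2) z Hz) as [Hzx Hzy].
  assert (Hzx' : a < fst z < b) by (unfold a, b; lra). assert (Hzy' : c < snd z < d) by (unfold c, d; lra).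
  set (K := rect_int (fun w => / (w - z))%C a b c d).
  assert (HK : K <> 0%C)
    by (intros E; pose proof (Im_rect_int_kernel_pos a b c d z Hzx' Hzy') as H;
        fold K in H; rewrite E in H; simpl in H; lra).
  assert (Hfar : forall w, on_rect_boundary a b c d w -> r <= Cmod (w - (cx, cy)))
    by (intros; apply on_square_boundary_far; [lra | assumption]).
  assert (Hwc : forall w, on_rect_boundary a b c d w -> w <> (cx, cy))
    by (intros w Hw E; pose proof (Hfar w Hw) as H; rewrite E, Cmod_sub_self in H; lra).
  assert (Hin : forall w, on_rect_boundary a b c d w -> a <= fst w <= b /\ c <= snd w <= d)
    by (intros; apply on_rect_boundary_in; assumption).
  destruct (rect_boundary_bounded G a b c d Hab Hcd) as [M HM].
  { intros w Hw. apply ex_Cderiv_continuous, HGsq; apply Hin, Hw. }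
  assert (Hsmall : forall N, Cmod (G z * K) <= 16 * M * (/ 2) ^ N).
  { intros N. unfold K.
    rewrite <- (rect_int_Cauchy_kernel G a b c d z Hzx' Hzy' HGsq),
      (rect_int_kernel_remainder G a b c d z (cx, cy) N Hzx' Hzy' H0 HGsq Hwc).
    replace (16 * M * (/ 2) ^ N) with (2 * ((b - a) + (d - c)) * (M * (/ 2) ^ N * (2 / r)))
      by (unfold a, b, c, d; field; lra).
    apply rect_int_bound; auto; intros w Hw.
    - apply ex_Cderiv_continuous, ex_Cderiv_kernel_remainder;
        [apply HGsq; apply Hin, Hw | apply Hwc, Hw | apply (on_rect_boundary_neq a b c d z); assumption].
    - pose proof (Hfar w Hw). pose proof (Cmod_sub_triangle w z (cx, cy)).
      apply Cmod_remainder_le; auto; lra. }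
  assert (HM0 : 0 <= M)
    by (eapply Rle_trans; [apply Cmod_ge_0 | apply (HM (a, c))]; unfold on_rect_boundary; simpl; lra).
  replace (G z) with (G z * K * / K)%C by (field; exact HK).
  rewrite (C_eq_0_epsilon (G z * K)); [ring|].
  intros eps Heps. destruct (exists_pow_half_lt (16 * M) eps ltac:(lra) Heps) as [N HN].
  pose proof (Hsmall N). lra.
Qed.

Lemma vanishes_near_spread (G : C -> C) (p q : C) (r : R) : 0 < r -> vanishes_near G p ->
  (forall w, Rabs (fst w - fst p) <= r -> Rabs (snd w - snd p) <= r -> ex_Cderiv G w) ->
  Cmod (q - p) < r / 2 -> vanishes_near G q.
Proof.
  intros Hr Hp HG Hq. exists (r / 2 - Cmod (q - p)). split; [lra|].
  intros w Hw. apply (vanishes_on_half_square G p r); auto.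
  pose proof (Cmod_sub_triangle w q p). lra.
Qed.

Lemma vanishes_near_segment (G : C -> C) (p q : C) (r : R) : 0 < r ->
  (forall t, 0 <= t <= 1 -> forall w,
     Rabs (fst w - fst (p + RtoC t * (q - p))%C) <= r ->
     Rabs (snd w - snd (p + RtoC t * (q - p))%C) <= r -> ex_Cderiv G w) ->
  vanishes_near G p -> vanishes_near G q.
Proof.
  intros Hr HG Hp.
  destruct (archimed_cor1 (r / (2 * (Cmod (q - p) + 1)))) as [n [Hn Hn0]].
  { apply Rdiv_lt_0_compat; [lra|]. pose proof (Cmod_ge_0 (q - p)). lra. }
  assert (HnR : 0 < INR n) by (apply lt_0_INR; lia).
  assert (Hstep : Cmod (q - p) / INR n < r / 2).
  { pose proof (Cmod_ge_0 (q - p)).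
    apply Rlt_div_r in Hn; [|lra]. apply Rlt_div_l; [lra|].
    apply (Rmult_lt_compat_l (INR n)) in Hn; [|lra].
    replace (INR n * (/ INR n * (2 * (Cmod (q - p) + 1)))) with (2 * (Cmod (q - p) + 1)) in Hn
      by (field; lra). nra. }
  set (P := fun k : nat => (p + RtoC (INR k / INR n) * (q - p))%C).
  assert (Hk : forall k, (k <= n)%nat -> vanishes_near G (P k)).
  { induction k as [|k IH]; intros Hkn.
    - unfold P. replace (INR 0 / INR n) with 0 by (simpl; unfold Rdiv; ring).
      replace (p + RtoC 0 * (q - p))%C with p by ring. exact Hp.
    - apply (vanishes_near_spread G (P k) (P (S k)) r Hr (IH ltac:(lia))).
      + apply HG. assert (INR k <= INR n) by (apply le_INR; lia).
        split; [apply Rdiv_le_0_compat; [apply pos_INR | lra] | apply (proj1 (Rdiv_le_1 _ _ HnR)); lra].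
      + unfold P. replace (p + RtoC (INR (S k) / INR n) * (q - p) - (p + RtoC (INR k / INR n) * (q - p)))%C
          with (RtoC (/ INR n) * (q - p))%C
          by (rewrite S_INR; unfold Rdiv; rewrite Rmult_plus_distr_r, Rmult_1_l, RtoC_plus; ring).
        rewrite Cmod_mult, Cmod_R, Rabs_right by (left; apply Rinv_0_lt_compat, HnR).
        unfold Rdiv in Hstep. lra. }
  specialize (Hk n (le_n n)). unfold P in Hk.
  replace (INR n / INR n) with 1 in Hk by (field; apply Rgt_not_eq, HnR).
  replace (p + RtoC 1 * (q - p))%C with q in Hk by ring. exact Hk.
Qed.

Lemma vanishes_near_off_axis (G : C -> C) (x0 x y : R) :
  (forall w, snd w <> 0 -> ex_Cderiv G w) -> (forall w, x0 < Re w -> G w = 0%C) -> y <> 0 ->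
  vanishes_near G (x, y).
Proof.
  intros HG Hx0 Hy. set (X := Rabs x + Rabs x0 + 2).
  assert (HX : x0 + 1 < X) by (unfold X; pose proof (Rle_abs x0); pose proof (Rabs_pos x); lra).
  apply Rabs_pos_lt in Hy.
  apply (vanishes_near_segment G (X, y) (x, y) (Rabs y / 2)); [lra | |].
  - intros t _ w _ Hw. replace ((X, y) + RtoC t * ((x, y) - (X, y)))%C with (X + t * (x - X), y) in Hw by Cring.
    simpl in Hw. apply HG. intros E. rewrite E, Rabs_minus_sym, Rminus_0_r in Hw. lra.
  - exists 1. split; [lra|]. intros w Hw. apply Hx0.
    destruct (in_square_of_Cmod_lt X y 1 w Hw). unfold Re. lra.
Qed.

Lemma vanishes_on_C_minus_1_2 (G : C -> C) (x0 : R) :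
  (forall w, w <> RtoC 1 -> w <> RtoC 2 -> ex_Cderiv G w) ->
  (forall w, x0 < Re w -> G w = 0%C) ->
  forall s, s <> RtoC 1 -> s <> RtoC 2 -> G s = 0%C.
Proof.
  intros HG Hx0 [x y] Hs1 Hs2.
  assert (Hoff_axis : forall w, snd w <> 0 -> ex_Cderiv G w)
    by (intros w Hw; apply HG; intros ->; apply Hw; reflexivity).
  cut (vanishes_near G (x, y)).
  { intros [rho [Hrho H]]. apply H. rewrite Cmod_sub_self. exact Hrho. }
  destruct (Req_dec y 0) as [-> | Hy]; [|exact (vanishes_near_off_axis G x0 x y Hoff_axis Hx0 Hy)].
  assert (H1 : 0 < Rabs (x - 1)) by (apply Rabs_pos_lt; intros E; apply Hs1; unfold RtoC; f_equal; lra).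
  assert (H2 : 0 < Rabs (x - 2)) by (apply Rabs_pos_lt; intros E; apply Hs2; unfold RtoC; f_equal; lra).
  set (rho := Rmin (Rabs (x - 1)) (Rabs (x - 2)) / 2).
  assert (Hrho1 : rho < Rabs (x - 1)) by (unfold rho; pose proof (Rmin_l (Rabs (x - 1)) (Rabs (x - 2))); lra).
  assert (Hrho2 : rho < Rabs (x - 2)) by (unfold rho; pose proof (Rmin_r (Rabs (x - 1)) (Rabs (x - 2))); lra).
  apply (vanishes_near_segment G (x, 1) (x, 0) rho).
  - unfold rho. apply Rdiv_lt_0_compat; [apply Rmin_pos|]; lra.
  - intros t _ w Hw _. replace ((x, 1) + RtoC t * ((x, 0) - (x, 1)))%C with (x, 1 - t) in Hw by Cring.
    simpl in Hw. apply HG; intros E; rewrite E in Hw; simpl in Hw; rewrite Rabs_minus_sym in Hw; lra.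
  - apply (vanishes_near_off_axis G x0); [exact Hoff_axis | exact Hx0 | lra].
Qed.

(** * The double series *)

Notation is_Cseries := (@is_series C_AbsRing C_NormedModule).
Notation Csum := (@sum_n (NormedModule.AbelianMonoid C_AbsRing C_NormedModule)).

Lemma Csum_S (a : nat -> C) (n : nat) : Csum a (S n) = (Csum a n + a (S n))%C.
Proof. exact (@sum_Sn (NormedModule.AbelianMonoid C_AbsRing C_NormedModule) a n). Qed.

Lemma is_Cseries_Cmod_lt (a : nat -> C) (l : C) (eps : R) : is_Cseries a l -> 0 < eps ->
  exists N, forall n, (N <= n)%nat -> Cmod (Csum a n - l) < eps.
Proof.
  intros Ha Heps. destruct (proj1 (filterlim_locally_ball_norm _ _) Ha (mkposreal eps Heps)) as [N HN].
  exists N. intros n Hn. exact (HN n Hn).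
Qed.

Lemma is_Cseries_unique (a : nat -> C) (l l' : C) : is_Cseries a l -> is_Cseries a l' -> l = l'.
Proof. apply (@filterlim_locally_unique _ _ C_NormedModule eventually _). Qed.

Lemma is_Cseries_Cmod_le (a : nat -> C) (l : C) (B : R) : is_Cseries a l ->
  (forall n, Cmod (Csum a n) <= B) -> Cmod l <= B.
Proof.
  intros Ha HB. apply Rnot_lt_le. intros Hl.
  destruct (is_Cseries_Cmod_lt a l (Cmod l - B) Ha ltac:(lra)) as [N HN].
  specialize (HN N (le_n N)). specialize (HB N).
  pose proof (Cmod_le_Cmod_sub l (Csum a N)). rewrite Cmod_sub_sym in HN. lra.
Qed.

Lemma is_Cseries_tail (f : nat -> C) (g : nat -> C) (i : nat) :
  (forall i, is_Cseries (fun j => f (S i + S j)%nat) (g i)) -> g i = (f (S i + 1)%nat + g (S i))%C.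
Proof.
  intros Hg.
  assert (H : is_Cseries (fun j => f (S i + S (S j))%nat) (g i - f (S i + 1)%nat)%C).
  { pose proof (Hg i) as Hi.
    assert (E : g i = plus (g i - f (S i + 1)%nat)%C (f (S i + 1)%nat))
      by (change (g i = g i - f (S i + 1)%nat + f (S i + 1)%nat)%C; ring).
    rewrite E in Hi. exact (@is_series_incr_1 C_AbsRing C_NormedModule _ _ Hi). }
  assert (H' : is_Cseries (fun j => f (S (S i) + S j)%nat) (g i - f (S i + 1)%nat)%C).
  { apply (is_series_ext _ _ _ (fun j => f_equal f (eq_sym (Nat.add_succ_comm (S i) (S j)))) H). }
  rewrite (is_Cseries_unique _ _ _ (Hg (S i)) H'). ring.
Qed.

Lemma Cmod_npow_neg (n : nat) (s : C) : Cmod (npow_neg n s) = exp (- Re s * ln (INR n)).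
Proof.
  unfold npow_neg. rewrite Cmod_mult, Cmod_R, Rabs_right by (apply Rle_ge, Rlt_le, exp_pos).
  set (x := Im s * ln (INR n)).
  replace (Cmod (cos x, - sin x)) with 1; [ring|].
  unfold Cmod; cbn [fst snd].
  replace (cos x ^ 2 + (- sin x) ^ 2) with 1 by (rewrite <- (sin2_cos2 x); unfold Rsqr; ring).
  symmetry. apply sqrt_1.
Qed.

Lemma Cmod_npow_neg_le (n : nat) (s : C) : (1 <= n)%nat -> 4 <= Re s ->
  Cmod (npow_neg n s) <= / INR n ^ 4.
Proof.
  intros Hn Hs. rewrite Cmod_npow_neg.
  assert (Hn1 : 1 <= INR n) by (apply (le_INR 1); exact Hn).
  assert (Hln : 0 <= ln (INR n)) by (rewrite <- ln_1; apply ln_le; lra).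
  apply Rle_trans with (exp (- (4 * ln (INR n)))).
  - assert (H : - Re s * ln (INR n) <= - (4 * ln (INR n))) by nra.
    destruct H as [H | ->]; [left; apply exp_increasing, H | right; reflexivity].
  - rewrite exp_Ropp. replace (4 * ln (INR n)) with (ln (INR n) + ln (INR n) + ln (INR n) + ln (INR n)) by ring.
    rewrite !exp_plus, exp_ln by lra. right. f_equal. ring.
Qed.

Lemma npow_neg_shift (n : nat) (s : C) : (1 <= n)%nat ->
  npow_neg n s = (RtoC (INR n) * npow_neg n (s + 1))%C.
Proof.
  intros Hn. assert (Hn0 : 0 < INR n) by (apply lt_0_INR; lia).
  unfold npow_neg. replace (Im (s + 1)%C) with (Im s) by (change (Im s = Im s + 0); ring).
  rewrite Cmult_assoc, <- RtoC_mult. f_equal. f_equal.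
  change (Re (s + 1)%C) with (Re s + 1).
  replace (- (Re s + 1) * ln (INR n)) with (- Re s * ln (INR n) + - ln (INR n)) by ring.
  rewrite exp_plus, exp_Ropp, exp_ln by lra. field. lra.
Qed.

Lemma inv_pow4_le_telescoping (x y : R) : 0 <= x -> 0 <= y ->
  / (x + 2 + y) ^ 4 <= (/ (x + 1 + y) - / (x + 2 + y)) / (x + 1) ^ 2.
Proof.
  intros Hx Hy.
  replace ((/ (x + 1 + y) - / (x + 2 + y)) / (x + 1) ^ 2) with (/ ((x + 1 + y) * (x + 2 + y) * (x + 1) ^ 2))
    by (field; lra).
  apply Rinv_le_contravar; [apply Rmult_lt_0_compat; [nra | apply pow_lt; lra]|].
  replace ((x + 2 + y) ^ 4) with ((x + 2 + y) * (x + 2 + y) * ((x + 2 + y) * (x + 2 + y))) by ring.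
  apply Rmult_le_compat; nra.
Qed.

Lemma Cmod_tail_le (f : nat -> C) (K : nat) (l : C) :
  (forall n, (1 <= n)%nat -> Cmod (f n) <= / INR n ^ 4) ->
  is_Cseries (fun j => f (S K + S j)%nat) l -> Cmod l <= / (INR K + 1) ^ 3.
Proof.
  intros Hf Hl. apply (is_Cseries_Cmod_le _ _ _ Hl). intros n.
  assert (HK : 0 <= INR K) by apply pos_INR.
  assert (Hterm : forall j, Cmod (f (S K + S j)%nat) <= (/ (INR K + 1 + INR j) - / (INR K + 2 + INR j)) / (INR K + 1) ^ 2).
  { intros j. eapply Rle_trans; [apply Hf; lia|].
    replace (INR (S K + S j)) with (INR K + 2 + INR j) by (rewrite plus_INR, !S_INR; ring).
    apply inv_pow4_le_telescoping; [exact HK | apply pos_INR]. }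
  apply Rle_trans with ((/ (INR K + 1) - / (INR K + 2 + INR n)) / (INR K + 1) ^ 2).
  - induction n as [|n IH].
    + rewrite sum_O. eapply Rle_trans; [apply Hterm|]. simpl. right. field. lra.
    + rewrite Csum_S. eapply Rle_trans; [apply Cmod_triangle|].
      eapply Rle_trans; [apply Rplus_le_compat; [apply IH | apply Hterm]|].
      right. rewrite S_INR. field. pose proof (pos_INR n). lra.
  - assert (0 < / (INR K + 2 + INR n)) by (apply Rinv_0_lt_compat; pose proof (pos_INR n); lra).
    replace (/ (INR K + 1) ^ 3) with (/ (INR K + 1) / (INR K + 1) ^ 2) by (field; lra).
    unfold Rdiv. apply Rmult_le_compat_r; [left; apply Rinv_0_lt_compat, pow_lt; lra | lra].
Qed.

Lemma is_Cseries_eq_of_partial_sums (a b : nat -> C) (la lb k : C) :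
  is_Cseries a la -> is_Cseries b lb ->
  (forall n, Cmod (Csum a n - k * Csum b n) <= / INR (S n)) -> la = (k * lb)%C.
Proof.
  intros Ha Hb HD. apply Ceq_minus, C_eq_0_epsilon. intros eps Heps.
  assert (Hk : 0 < Cmod k + 1) by (pose proof (Cmod_ge_0 k); lra).
  destruct (is_Cseries_Cmod_lt a la (eps / 3) Ha ltac:(lra)) as [N1 HN1].
  destruct (is_Cseries_Cmod_lt b lb (eps / 3 / (Cmod k + 1)) Hb ltac:(apply Rdiv_lt_0_compat; lra)) as [N2 HN2].
  destruct (archimed_cor1 (eps / 3) ltac:(lra)) as [N3 [HN3 HN3']].
  set (n := max N1 (max N2 N3)).
  specialize (HN1 n ltac:(unfold n; lia)). specialize (HN2 n ltac:(unfold n; lia)). specialize (HD n).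
  assert (Hn : / INR (S n) < eps / 3).
  { eapply Rle_lt_trans; [|exact HN3]. apply Rinv_le_contravar; [apply lt_0_INR; lia|].
    apply le_INR. unfold n. lia. }
  assert (Hkb : Cmod (k * (Csum b n - lb)) <= eps / 3).
  { rewrite Cmod_mult. apply Rlt_div_r in HN2; [|lra].
    pose proof (Cmod_ge_0 k). pose proof (Cmod_ge_0 (Csum b n - lb)). nra. }
  replace (la - k * lb)%C with ((Csum a n - k * Csum b n) - (Csum a n - la) + k * (Csum b n - lb))%C by ring.
  eapply Rle_trans; [apply Cmod_triangle|].
  eapply Rle_trans; [apply Rplus_le_compat_r; unfold Cminus at 1; apply Cmod_triangle|].
  rewrite Cmod_opp. lra.
Qed.

Lemma tail_sums_telescope (phi psi g0 g1 u : nat -> C) :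
  (forall i, is_Cseries (fun j => phi (S i + S j)%nat) (g0 i)) ->
  (forall i, is_Cseries (fun j => psi (S i + S j)%nat) (u i)) ->
  (forall K, phi (S K + 1)%nat = (RtoC (INR K + 2) * psi (S K + 1)%nat)%C) ->
  (forall i, g1 i = (RtoC (INR (S i)) * u i)%C) ->
  forall n, (Csum g0 n - RtoC 2 * Csum g1 n)%C =
    (RtoC (INR (S n)) * g0 (S n) - RtoC (INR (S n)) * RtoC (INR (S n) + 1) * u (S n))%C.
Proof.
  intros Hphi Hpsi Hshift Hg1u. induction n as [|n IH].
  - rewrite !sum_O, (Hg1u 0%nat), (is_Cseries_tail phi g0 0 Hphi), (is_Cseries_tail psi u 0 Hpsi), Hshift.
    cbn [INR]. rewrite !RtoC_plus. ring.
  - rewrite !Csum_S.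
    replace (Csum g0 n + g0 (S n) - RtoC 2 * (Csum g1 n + g1 (S n)))%C
      with (Csum g0 n - RtoC 2 * Csum g1 n + g0 (S n) - RtoC 2 * g1 (S n))%C by ring.
    rewrite IH, (Hg1u (S n)), (is_Cseries_tail phi g0 (S n) Hphi), (is_Cseries_tail psi u (S n) Hpsi), Hshift.
    rewrite !S_INR, !RtoC_plus. ring.
Qed.

Lemma Cmod_telescoped_le (A B : C) (x : R) : 1 <= x ->
  Cmod A <= / (x + 1) ^ 3 -> Cmod B <= / (x + 1) ^ 3 ->
  Cmod (RtoC x * A - RtoC x * RtoC (x + 1) * B) <= / x.
Proof.
  intros Hx HA HB. pose proof (Cmod_ge_0 A). pose proof (Cmod_ge_0 B).
  eapply Rle_trans; [unfold Cminus; apply Cmod_triangle|].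
  rewrite Cmod_opp, !Cmod_mult, !Cmod_R, !Rabs_right by lra.
  assert (H1 : x * Cmod A <= x * / (x + 1) ^ 3) by (apply Rmult_le_compat_l; lra).
  assert (H2 : x * (x + 1) * Cmod B <= x * (x + 1) * / (x + 1) ^ 3) by (apply Rmult_le_compat_l; nra).
  assert (E : / x - (x + x * (x + 1)) * / (x + 1) ^ 3 = (x ^ 2 + 3 * x + 1) / (x * (x + 1) ^ 3))
    by (field; lra).
  assert (0 <= (x ^ 2 + 3 * x + 1) / (x * (x + 1) ^ 3))
    by (apply Rdiv_le_0_compat; [nra | apply Rmult_lt_0_compat; [lra | apply pow_lt; lra]]).
  lra.
Qed.

Lemma dz_series_value_0_eq_twice_1 (s v0 v1 : C) : 4 <= Re s ->
  dz_series_value 0 s v0 -> dz_series_value 1 s v1 -> v0 = (RtoC 2 * v1)%C.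
Proof.
  intros Hs [g0 [Hg0 Hv0]] [g1 [Hg1 Hv1]].
  set (phi := fun n => npow_neg n (s + RtoC (INR 0))).
  set (psi := fun n => npow_neg n (s + RtoC (INR 1))).
  set (u := fun i => (/ RtoC (INR (S i)) * g1 i)%C).
  assert (HSi : forall i, RtoC (INR (S i)) <> 0%C)
    by (intros i E; apply RtoC_inj in E; pose proof (lt_0_INR (S i) ltac:(lia)); lra).
  assert (Hphi : forall i, is_Cseries (fun j => phi (S i + S j)%nat) (g0 i)).
  { intros i. eapply is_series_ext; [|apply (Hg0 i)].
    intros j. unfold dz_term, phi. rewrite pow_O. apply Cmult_1_l. }
  assert (Hpsi : forall i, is_Cseries (fun j => psi (S i + S j)%nat) (u i)).
  { intros i. eapply is_series_ext; [|apply (@is_series_scal C_AbsRing C_NormedModule _ _ _ (Hg1 i))].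
    intros j. unfold dz_term, psi. rewrite pow_1.
    change (/ RtoC (INR (S i)) * (RtoC (INR (S i)) * psi (S i + S j)%nat) = psi (S i + S j)%nat)%C.
    field. apply HSi. }
  assert (Hshift : forall K, phi (S K + 1)%nat = (RtoC (INR K + 2) * psi (S K + 1)%nat)%C).
  { intros K. unfold phi, psi. rewrite npow_neg_shift by lia.
    replace (INR (S K + 1)) with (INR K + 2) by (rewrite plus_INR, S_INR; simpl; ring).
    f_equal. f_equal. simpl. Cring. }
  assert (Hg1u : forall i, g1 i = (RtoC (INR (S i)) * u i)%C) by (intros i; unfold u; field; apply HSi).
  assert (HRe0 : 4 <= Re (s + RtoC (INR 0))%C) by (unfold Re in *; simpl; lra).
  assert (HRe1 : 4 <= Re (s + RtoC (INR 1))%C) by (unfold Re in *; simpl; lra).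
  apply (is_Cseries_eq_of_partial_sums g0 g1 v0 v1 (RtoC 2) Hv0 Hv1). intros n.
  rewrite (tail_sums_telescope phi psi g0 g1 u Hphi Hpsi Hshift Hg1u n).
  apply Cmod_telescoped_le; [apply (le_INR 1); lia | |];
    rewrite <- S_INR; [apply (Cmod_tail_le phi) | apply (Cmod_tail_le psi)]; auto;
    intros N HN; apply Cmod_npow_neg_le; assumption.
Qed.

Theorem lemma3p1 (F0 F1 : C -> C)
  (H0 : is_dz_continuation 0 F0) (H1 : is_dz_continuation 1 F1)
  (s : C) (hs1 : s <> RtoC 1) (hs2 : s <> RtoC 2) :
  F0 s = Cmult (RtoC 2) (F1 s).
Proof.
  destruct H0 as [D0 S0], H1 as [D1 S1].
  apply Ceq_minus.
  apply (vanishes_on_C_minus_1_2 (fun w => F0 w - RtoC 2 * F1 w)%C 4); auto.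
  - intros w Hw1 Hw2. apply ex_Cderiv_minus; [|apply ex_Cderiv_mult; [apply ex_Cderiv_const|]];
      apply C_holo_at_ex_Cderiv; auto.
  - intros w Hw. rewrite (dz_series_value_0_eq_twice_1 w (F0 w) (F1 w)); [ring | lra | apply S0 | apply S1]; lra.
Qed.
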